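(* Let $m\ge2$ and let $G$ be the group of type $D_1$. Then the distinct non-identity normal subgroups of $G$ are exactly: (i) $\langle t^{2^{\alpha}},x\rangle$, $\langle t^{2^{\alpha}},y\rangle$, $\langle t^{2^{\alpha}},xy\rangle$, $\langle t^{2^{\alpha}},x,y\rangle$ for $0\le\alpha\le m-1$; (ii) $\langle t^{2^{\beta}}x\rangle$, $\langle t^{2^{\beta}}y\rangle$, $\langle t^{2^{m-1}},t^{2^{\beta}}xy\rangle$, $\langle t^{2^{m-1}},x,t^{2^{\beta}}y\rangle$, $\langle t^{2^{m-1}},t^{2^{\beta}}x,y\rangle$, $\langle t^{2^{\beta}}x,t^{2^{\beta}}y\rangle$ for $0\le\beta\le m-2$; (iii) $\langle t^{2^{\gamma}}\rangle$ for $0\le\gamma\le m-1$.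
   Context: The group of type $D_1$ (with parameter $m\ge1$) is $G=\langle x,y,t\mid x^2=y^2=t^{2^m}=1,\ y^{-1}x^{-1}yx\,t^{2^{m-1}}=1,\ t \text{ central}\rangle$, of order $2^{m+2}$. *)

From mathcomp Require Import all_boot all_order all_fingroup.
Set Implicit Arguments. Unset Strict Implicit. Unset Printing Implicit Defensive.
Import GroupScope.

(* The group of type D_1: generated by x, y, t with
   x^2 = y^2 = t^(2^m) = 1, [~ y, x] * t^(2^(m-1)) = 1 (mathcomp's
   [~ y, x] = y^-1 * x^-1 * y * x), t central, and of order 2^(m+2). *)
Definition D1_rels (gT : finGroupType) (m : nat) (x y t : gT) : Prop :=
  [/\ x ^+ 2 = 1, y ^+ 2 = 1, t ^+ (2 ^ m) = 1,
      [~ y, x] * t ^+ (2 ^ (m - 1)) = 1 & commute t x /\ commute t y].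

Section D1List.
Variables (gT : finGroupType) (m : nat) (x y t : gT).

Definition D1_list_i : seq {set gT} :=
  flatten [seq [:: <<[set t ^+ (2 ^ a); x]>>; <<[set t ^+ (2 ^ a); y]>>;
                   <<[set t ^+ (2 ^ a); x * y]>>; <<[set t ^+ (2 ^ a); x; y]>>]
          | a <- iota 0 m].

Definition D1_list_ii : seq {set gT} :=
  flatten [seq [:: <[t ^+ (2 ^ b) * x]>; <[t ^+ (2 ^ b) * y]>;
                   <<[set t ^+ (2 ^ (m - 1)); t ^+ (2 ^ b) * (x * y)]>>;
                   <<[set t ^+ (2 ^ (m - 1)); x; t ^+ (2 ^ b) * y]>>;
                   <<[set t ^+ (2 ^ (m - 1)); t ^+ (2 ^ b) * x; y]>>;
                   <<[set t ^+ (2 ^ b) * x; t ^+ (2 ^ b) * y]>>]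
          | b <- iota 0 (m - 1)].

Definition D1_list_iii : seq {set gT} :=
  [seq <[t ^+ (2 ^ c)]> | c <- iota 0 m].

Definition D1_list : seq {set gT} := D1_list_i ++ D1_list_ii ++ D1_list_iii.
End D1List.

From mathcomp Require Import all_boot all_order all_fingroup.
From mathcomp Require Import commutator cyclic zify.
Set Implicit Arguments. Unset Strict Implicit. Unset Printing Implicit Defensive.

(* Every element of G is uniquely t^i x^a y^b with i taken modulo 2^m and a, b in
   {0, 1}, and z = t^(2^(m-1)) = [y, x] is a central involution; conjugation by x or
   y only moves the t-exponent by a multiple of 2^(m-1).
   A nontrivial normal subgroup H contains z: conjugating an element outside <t>
   produces z, and a nontrivial subgroup of the cyclic 2-group <t> contains its
   involution. Hence H meets <t> in <t^(2^al)> with al < m, and since the square of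
   t^r x^a y^b lies in that intersection, r is 0 or 2^(al-1) modulo 2^al. So H is
   described by al, the subgroup of the Klein four-group G/<t> covered by H, and a
   homomorphism from that subgroup to Z/2 telling which cosets are twisted by
   t^(2^(al-1)); conversely every such datum with al < m describes a normal
   subgroup. Twists need al >= 1, and the admissible data are exactly the eleven
   families of the list, each generated by the listed elements. *)

(** * Arithmetic modulo powers of 2 *)

Lemma half_twistD al (s s' : bool) :
  2 ^ al.-1 * s + 2 ^ al.-1 * s' = 2 ^ al.-1 * (s (+) s') %[mod 2 ^ al].
Proof.
case: al => [|al]; first by rewrite !modn1.
by case: s; case: s' => /=;
  rewrite ?muln0 ?muln1 ?addn0 ?add0n // addnn -mul2n -expnS modnn mod0n.
Qed.

Lemma half_twist_inj al (s s' : bool) : (s -> 0 < al) -> (s' -> 0 < al) ->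
  2 ^ al.-1 * s = 2 ^ al.-1 * s' %[mod 2 ^ al] -> s = s'.
Proof.
have half_mod : 0 < al -> 2 ^ al.-1 %% 2 ^ al = 2 ^ al.-1.
  by move=> al_gt0; rewrite modn_small // ltn_exp2l // prednK.
case: s; case: s' => //=; [move=> /(_ isT) al_gt0 _ | move=> _ /(_ isT) al_gt0];
  by rewrite muln0 muln1 mod0n half_mod // => /eqP; rewrite ?expn_eq0 // eq_sym expn_eq0.
Qed.

Lemma double_mod_pow2 al r : 2 ^ al %| r + r ->
  exists2 s : bool, (s -> 0 < al) & r = 2 ^ al.-1 * s %[mod 2 ^ al].
Proof.
case: al => [|al] e; first by exists false; rewrite ?modn1.
have /dvdnP[q ->] : 2 ^ al %| r by rewrite -(@dvdn_pmul2l 2) // -expnS mul2n -addnn.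
exists (odd q) => //=.
by rewrite {1}(divn_eq q 2) mulnDl -mulnA -expnS modnMDl modn2 mulnC.
Qed.

Lemma pow2_odd_factor n k : 0 < n -> n < 2 ^ k ->
  exists v w, [/\ v < k, odd w & n = w * 2 ^ v].
Proof.
move=> n_gt0 n_lt.
have [w cw e] := pfactor_coprime (isT : prime 2) n_gt0.
exists (logn 2 n), w; split => //; last by rewrite -coprime2n.
rewrite -(ltn_exp2l _ _ (isT : 1 < 2)); apply: leq_ltn_trans n_lt.
by rewrite {2}e leq_pmull // lt0n; apply: contraTneq cw => ->.
Qed.

Lemma dvdn_shift d n i r : d %| n -> 0 < n -> (d %| i + (n - 1) * r) = (i == r %[mod d]).
Proof.
move=> dn n_gt0; rewrite /dvdn -[X in _ == X](mod0n d) -(eqn_modDr r) add0n.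
by rewrite -addnA -mulSnr subn1 prednK // -modnDmr (eqP (dvdn_mulr r dn)) addn0.
Qed.

(** * Homomorphisms from subgroups of the Klein four-group *)

(* A homomorphism from a subgroup of the Klein four-group {1, x, y, xy} to Z/2, given
   by its values at x, y and xy; [None] marks an element outside the subgroup. *)
Definition vhom := (option bool * option bool * option bool)%type.

Definition vhom_at (c : vhom) (a b : bool) : option bool :=
  let: (cx, cy, cxy) := c in
  if a then (if b then cxy else cx) else (if b then cy else Some false).

Definition vhom_compat (o1 o2 o3 : option bool) :=
  if (o1, o2) is (Some s1, Some s2) then o3 == Some (s1 (+) s2) else true.

Definition is_vhom (c : vhom) :=
  let: (cx, cy, cxy) := c in
  [&& vhom_compat cx cy cxy, vhom_compat cx cxy cy & vhom_compat cy cxy cx].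

Lemma is_vhomP c :
  reflect (forall a b a' b' s s', vhom_at c a b = Some s -> vhom_at c a' b' = Some s' ->
             vhom_at c (a (+) a') (b (+) b') = Some (s (+) s'))
          (is_vhom c).
Proof.
case: c => [[cx cy] cxy]; apply: (iffP idP) => [vh a b a' b' s s'|cl].
  by move: vh; case: a; case: b; case: a'; case: b'; case: cx => [[]|]; case: cy => [[]|];
    case: cxy => [[]|]; case: s; case: s' => //= _ [] [].
apply/and3P; split; rewrite /vhom_compat.
- case E1: cx => [s1|] //; case E2: cy => [s2|] //.
  by have /= -> := cl true false false true s1 s2 E1 E2.
- case E1: cx => [s1|] //; case E2: cxy => [s2|] //.
  by have /= -> := cl true false true true s1 s2 E1 E2.
case E1: cy => [s1|] //; case E2: cxy => [s2|] //.
by have /= -> := cl false true true true s1 s2 E1 E2.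
Qed.

Lemma vhom_ext c c' : (forall a b, vhom_at c a b = vhom_at c' a b) -> c = c'.
Proof.
case: c c' => [[cx cy] cxy] [[cx' cy'] cxy'] e.
by move: (e true false) (e false true) (e true true) => /= -> -> ->.
Qed.

(* The twist 2^(al.-1) is 1, hence 0 modulo 2^al, when al = 0; canonical data then
   carry no twist. *)
Definition twist_ok al (o : option bool) := if o is Some true then 0 < al else true.

Definition vhom_ok al (c : vhom) :=
  let: (cx, cy, cxy) := c in [&& twist_ok al cx, twist_ok al cy & twist_ok al cxy].

Lemma vhom_ok_at al c a b : vhom_ok al c -> twist_ok al (vhom_at c a b).
Proof. by case: c => [[cx cy] cxy] /and3P[? ? ?]; case: a; case: b. Qed.

Definition coset_mem al (o : option bool) i :=
  if o is Some s then i == 2 ^ al.-1 * s %[mod 2 ^ al] else false.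

Lemma coset_mem_inj al o o' : twist_ok al o -> twist_ok al o' ->
  coset_mem al o =1 coset_mem al o' -> o = o'.
Proof.
have twistP s : twist_ok al (Some s) -> s -> 0 < al by case: s.
case: o => [s|]; case: o' => [s'|] // /twistP ok /twistP ok' eq_mem.
- by have := eq_mem (2 ^ al.-1 * s); rewrite /= eqxx => /esym/eqP/(half_twist_inj ok ok')->.
- by have := eq_mem (2 ^ al.-1 * s); rewrite /= eqxx.
- by have := eq_mem (2 ^ al.-1 * s'); rewrite /= eqxx.
Qed.

(* The datum (al, c) describes the set of t^i x^a y^b with c(a, b) = Some s and
   i = 2^(al-1) s modulo 2^al. *)
Definition param_mem (p : nat * vhom) i (a b : bool) := coset_mem p.1 (vhom_at p.2 a b) i.

Lemma param_memDr p i k a b : 2 ^ p.1 %| k -> param_mem p (i + k) a b = param_mem p i a b.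
Proof.
by move=> dk; rewrite /param_mem; case: vhom_at => //= s; rewrite -modnDmr (eqP dk) addn0.
Qed.

Lemma param_mem_mod p i n a b : 2 ^ p.1 %| n -> param_mem p (i %% n) a b = param_mem p i a b.
Proof. by move=> dn; rewrite /param_mem; case: vhom_at => //= s; rewrite modn_dvdm. Qed.

Lemma param_memM p i a b j c d : is_vhom p.2 ->
  param_mem p i a b -> param_mem p j c d -> param_mem p (i + j) (a (+) c) (b (+) d).
Proof.
rewrite /param_mem => /is_vhomP vhM; case E: vhom_at => [s|] //; case E': vhom_at => [s'|] //=.
by rewrite (vhM _ _ _ _ _ _ E E') /= -modnDm => /eqP-> /eqP->; rewrite modnDm half_twistD.
Qed.

Lemma param_mem_t p j : param_mem p j false false = (2 ^ p.1 %| j).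
Proof. by case: p => al [[cx cy] cxy]; rewrite /param_mem /= muln0 mod0n. Qed.

Lemma param_mem0 p : param_mem p 0 false false.
Proof. by rewrite param_mem_t dvdn0. Qed.

Definition D1_param m (p : nat * vhom) := [&& p.1 < m, is_vhom p.2 & vhom_ok p.1 p.2].

Definition vhoms_untwisted : seq vhom :=
  [:: (Some false, None, None); (None, Some false, None); (None, None, Some false);
      (Some false, Some false, Some false)].

Definition vhoms_twisted : seq vhom :=
  [:: (Some true, None, None); (None, Some true, None); (None, None, Some true);
      (Some false, Some true, Some true); (Some true, Some false, Some true);
      (Some true, Some true, Some false)].

Definition vhom1 : vhom := (None, None, None).

Definition param_list m : seq (nat * vhom) :=
  [seq (a, c) | a <- iota 0 m, c <- vhoms_untwisted] ++
  [seq (b.+1, c) | b <- iota 0 (m - 1), c <- vhoms_twisted] ++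
  [seq (a, vhom1) | a <- iota 0 m].

Lemma vhom_classes c : is_vhom c ->
  [|| c == vhom1, c \in vhoms_untwisted | c \in vhoms_twisted].
Proof. by case: c => [[[[]|] [[]|]] [[]|]]. Qed.

Lemma vhoms_twisted_ok al c : c \in vhoms_twisted -> vhom_ok al c -> 0 < al.
Proof. by rewrite !inE => /or4P[|||/orP[|/orP[]]] /eqP-> /and3P[]. Qed.

Lemma mem_param_list m p : (p \in param_list m) = D1_param m p.
Proof.
case: p => al c; rewrite /D1_param /= !mem_cat; apply/idP/idP.
  case/or3P=> [/allpairsP[[a c'] [/= + + [-> ->]]]|/allpairsP[[b c'] [/= + + [-> ->]]]|].
  - by rewrite mem_iota /= => -> /=; rewrite !inE => /or4P[] /eqP->.
  - rewrite mem_iota /= => b_lt; have -> : b.+1 < m by lia.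
    by rewrite !inE => /or4P[|||/orP[|/orP[]]] /eqP->.
  by case/mapP=> a; rewrite mem_iota /= => a_lt [-> ->]; rewrite a_lt.
case/and3P=> al_lt /vhom_classes /or3P[/eqP->|c_i|c_ii] ok.
- by apply/or3P/Or33/mapP; exists al; rewrite ?mem_iota.
- by apply/or3P/Or31; apply: allpairs_f c_i; rewrite mem_iota.
have := vhoms_twisted_ok c_ii ok; case: al al_lt {ok} => // b b_lt _.
apply/or3P/Or32; apply: (allpairs_f (fun b c => (b.+1, c))) c_ii.
by rewrite mem_iota /=; lia.
Qed.

Lemma uniq_param_list m : uniq (param_list m).
Proof.
have block_uniq (f : nat -> nat) n cs : injective f -> uniq cs ->
    uniq [seq (f a, c) | a <- iota 0 n, c <- cs].
  move=> inj_f uniq_cs; apply: allpairs_uniq; rewrite ?iota_uniq //.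
  by move=> [a c] [a' c'] _ _ /= [/inj_f-> ->].
have block_snd (f : nat -> nat) n cs p :
    p \in [seq (f a, c) | a <- iota 0 n, c <- cs] -> p.2 \in cs.
  by case/allpairsP=> [[a c] [_ cs_c ->]].
rewrite /param_list !cat_uniq !block_uniq //; last exact: succn_inj.
rewrite map_inj_uniq ?iota_uniq ?has_cat ?negb_or; last by move=> a a' [].
rewrite !andTb -andbA andbT; apply/and3P; split; apply/hasPn=> p.
- move/block_snd=> p_tw; apply/negP=> /block_snd p_un.
  by have /hasPn/(_ _ p_tw)/negP := (isT : ~~ has (mem vhoms_untwisted) vhoms_twisted).
- by case/mapP=> a _ ->; apply/negP=> /block_snd.
by case/mapP=> a _ ->; apply/negP=> /block_snd.
Qed.

(** * Normal form and normal subgroups of D_1 *)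

Import GroupScope.

Lemma invg_involution (gT : finGroupType) (x : gT) : x ^+ 2 = 1 -> x^-1 = x.
Proof. by move=> x2; apply/eqP; rewrite eq_invg_mul -expg2 x2. Qed.

Lemma expg_commutator_twist (gT : finGroupType) (x y : gT) b c :
  commute [~ y, x] x -> commute [~ y, x] y ->
  y ^+ b * x ^+ c = x ^+ c * y ^+ b * [~ y, x] ^+ (b * c).
Proof. by move=> cx cy; rewrite commgC commXXg //; exact: commute_sym. Qed.

Section Relations.

Variables (gT : finGroupType) (m : nat) (x y t : gT).
Hypotheses (m_gt0 : 0 < m) (rels : D1_rels m x y t).

Local Notation N := (2 ^ m)%N.
Local Notation h := (2 ^ (m - 1))%N.
Local Notation z := (t ^+ h).

Lemma expn_half : N = (2 * h)%N.
Proof. by rewrite -expnS subn1 prednK. Qed.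

Lemma x2 : x ^+ 2 = 1. Proof. by case: rels. Qed.
Lemma y2 : y ^+ 2 = 1. Proof. by case: rels. Qed.
Lemma tN : t ^+ N = 1. Proof. by case: rels. Qed.
Lemma z2 : z ^+ 2 = 1. Proof. by rewrite -expgM mulnC -expn_half tN. Qed.

Lemma commute_tx : commute t x. Proof. by case: rels => _ _ _ _ []. Qed.
Lemma commute_ty : commute t y. Proof. by case: rels => _ _ _ _ []. Qed.

Lemma commyx : [~ y, x] = z.
Proof.
case: rels => _ _ _ Ryx _.
by rewrite (canRL (mulgK z) Ryx) mul1g (invg_involution z2).
Qed.

Definition nf i a b := t ^+ i * x ^+ a * y ^+ b.

Lemma commute_t_nf j i a b : commute (t ^+ j) (nf i a b).
Proof.
apply: commuteM; first apply: commuteM.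
- exact: commuteX2 (commute_refl t).
- exact: commuteX2 commute_tx.
- exact: commuteX2 commute_ty.
Qed.

Lemma nf_mul i a b j c d :
  nf i a b * nf j c d = nf (i + j + h * (b * c)) (a + c) (b + d).
Proof.
set e := [~ y, x].
have cex : commute e x by rewrite /e commyx; exact/commute_sym/commuteX/commute_sym/commute_tx.
have cey : commute e y by rewrite /e commyx; exact/commute_sym/commuteX/commute_sym/commute_ty.
rewrite /nf !expgD expgM -commyx -/e.
rewrite !mulgA -(mulgA _ (y ^+ b)) (commuteX2 b j (commute_sym commute_ty)).
rewrite mulgA -(mulgA _ (x ^+ a)) (commuteX2 a j (commute_sym commute_tx)).
rewrite !mulgA -(mulgA _ (y ^+ b) (x ^+ c)) (expg_commutator_twist b c cex cey).
have ce : commute (e ^+ (b * c)) (x ^+ a * x ^+ c * y ^+ b * y ^+ d).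
  by apply: commuteM; [apply: commuteM; [apply: commuteM|]|]; apply: commuteX2.
rewrite !mulgA -(mulgA _ (e ^+ _) (y ^+ d)) (commuteX2 _ d cey).
by rewrite -!mulgA; congr (_ * (_ * _)); rewrite !mulgA -ce !mulgA.
Qed.

Lemma nf_mod i a b : nf i a b = nf (i %% N) (odd a) (odd b).
Proof. by rewrite /nf -!modn2 (expg_mod _ tN) (expg_mod _ x2) (expg_mod _ y2). Qed.

Lemma nf_modb i (a b : bool) : nf i a b = nf (i %% N) a b.
Proof. by rewrite nf_mod !oddb. Qed.

Lemma nf_mulb i (a b : bool) j (c d : bool) :
  nf i a b * nf j c d = nf (i + j + h * (b * c)) (a (+) c) (b (+) d).
Proof. by rewrite nf_mul (nf_mod _ (a + c)) !oddD !oddb -nf_modb. Qed.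

Lemma nf1 : nf 0 false false = 1.
Proof. by rewrite /nf !mulg1. Qed.

Lemma nf_t i : nf i false false = t ^+ i.
Proof. by rewrite /nf !mulg1. Qed.

Lemma nf_x : nf 0 true false = x.
Proof. by rewrite /nf mul1g mulg1. Qed.

Lemma nf_y : nf 0 false true = y.
Proof. by rewrite /nf !mul1g. Qed.

Lemma nf_conjx i (a b : bool) : nf i a b ^ x = nf (i + h * b) a b.
Proof.
rewrite conjgE (invg_involution x2) -nf_x !nf_mulb nf_modb [RHS]nf_modb.
by case: a; case: b => /=; congr (nf (_ %% N) _ _); lia.
Qed.

Lemma nf_conjy i (a b : bool) : nf i a b ^ y = nf (i + h * a) a b.
Proof.
rewrite conjgE (invg_involution y2) -nf_y !nf_mulb nf_modb [RHS]nf_modb.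
by case: a; case: b => /=; congr (nf (_ %% N) _ _); lia.
Qed.

Lemma nf_conjt i a b : nf i a b ^ t = nf i a b.
Proof. by rewrite conjgE -(commute_t_nf 1) mulKg. Qed.

Lemma N_gt0 : 0 < N. Proof. by rewrite expn_gt0. Qed.

Definition nf_of (p : 'I_N * bool * bool) := nf p.1.1 p.1.2 p.2.

Lemma nf_ofE i (a b : bool) : nf i a b = nf_of (Ordinal (ltn_pmod i N_gt0), a, b).
Proof. exact: nf_modb. Qed.

Lemma mem_nf_of i (a b : bool) : nf i a b \in nf_of @: setT.
Proof. by rewrite nf_ofE imset_f. Qed.

Lemma group_set_nf : group_set (nf_of @: setT).
Proof.
apply/group_setP; split; first by rewrite -nf1 mem_nf_of.
move=> _ _ /imsetP[[[i a] b] _ ->] /imsetP[[[j c] d] _ ->].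
by rewrite /nf_of nf_mulb mem_nf_of.
Qed.

Lemma nf_shift i r (a b : bool) : nf i a b = t ^+ (i + (N - 1) * r) * nf r a b.
Proof.
rewrite -nf_t nf_mulb muln0 addn0 nf_modb [RHS]nf_modb -addnA -mulSnr subn1.
by rewrite prednK ?N_gt0 // (mulnC N) addnC modnMDl.
Qed.

Lemma expg_dvd_mem (K : {group gT}) d j : t ^+ d \in K -> d %| j -> t ^+ j \in K.
Proof. by move=> tdK /divnK <-; rewrite mulnC expgM groupX. Qed.

Lemma nf_tmul k i a b : t ^+ k * nf i a b = nf (k + i) a b.
Proof. by rewrite /nf !mulgA expgD. Qed.

Lemma nf_xy : x * y = nf 0 true true.
Proof. by rewrite -nf_x -nf_y nf_mulb /= mul0n muln0. Qed.

Lemma nf_sqr k (a b : bool) : nf k a b * nf k a b = t ^+ (k + k + h * (b * a)).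
Proof. by rewrite nf_mulb !addbb nf_t. Qed.

Lemma nf_mul_xy (K : {group gT}) i j :
  nf i true false \in K -> nf j false true \in K -> nf (i + j) true true \in K.
Proof. by move=> Ki Kj; have := groupM Ki Kj; rewrite nf_mulb /= mul0n muln0 addn0. Qed.

Lemma nf_pow2_sqr b (a c : bool) :
  t ^+ (2 ^ b.+1) = nf (2 ^ b) a c * nf (2 ^ b) a c * z ^+ (c * a).
Proof.
rewrite nf_sqr -expgM -!expgD -addnA addnn -mul2n expnS [RHS]expgD.
by rewrite addnn -mul2n (mulnA 2) -expn_half (expgM t N) tN expg1n mulg1.
Qed.

Definition param_set p : {set gT} :=
  nf_of @: [set q : 'I_N * bool * bool | param_mem p q.1.1 q.1.2 q.2].

Section Generation.

Variable G : {group gT}.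
Hypotheses (defG : G :=: <<[set x; y; t]>>) (cardG : #|G| = (2 ^ (m + 2))%N).

Lemma card_nf_of : #|[set: 'I_N * bool * bool]| = #|G|.
Proof. by rewrite cardsT !card_prod card_ord card_bool cardG expnD -mulnA. Qed.

Lemma G_nf : G :=: nf_of @: setT.
Proof.
apply/eqP; rewrite eqEcard -card_nf_of leq_imset_card andbT defG.
rewrite (gen_subG _ (group group_set_nf)) /=.
by rewrite !subUset !sub1set -nf_x -nf_y -[t]expg1 -nf_t !mem_nf_of.
Qed.

Lemma nf_of_inj : injective nf_of.
Proof.
have /imset_injP injG : #|nf_of @: setT| == #|[set: 'I_N * bool * bool]|.
  by rewrite -G_nf card_nf_of.
by move=> p q; apply: injG; rewrite inE.
Qed.

Lemma eq_nf i (a b : bool) j (c d : bool) :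
  (nf i a b == nf j c d) = [&& i == j %[mod N], a == c & b == d].
Proof.
rewrite !nf_ofE (inj_eq nf_of_inj) !xpair_eqE.
by rewrite -(inj_eq val_inj) /= -andbA.
Qed.

Lemma nf_in_G i (a b : bool) : nf i a b \in G.
Proof. by rewrite G_nf mem_nf_of. Qed.

Lemma G_nfP g : g \in G -> exists i (a b : bool), g = nf i a b.
Proof. by rewrite G_nf => /imsetP[[[i a] b] _ ->]; exists i, a, b. Qed.

Lemma z_neq1 : z != 1.
Proof.
rewrite -nf_t -nf1 eq_nf !eqxx !andbT mod0n modn_small; last first.
  by rewrite ltn_exp2l // subn1 prednK ?ltnSn.
by rewrite expn_eq0.
Qed.

Lemma mem_param_set p i (a b : bool) :
  p.1 <= m -> (nf i a b \in param_set p) = param_mem p i a b.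
Proof.
move=> al_le; have dN : 2 ^ p.1 %| N by rewrite dvdn_exp2l.
apply/imsetP/idP => [[[[j c] d]] /[!inE] /= Pjcd /eqP|Piab].
  rewrite eq_nf => /and3P[/eqP eij /eqP-> /eqP->].
  by rewrite -(param_mem_mod _ _ _ dN) eij param_mem_mod.
by exists (Ordinal (ltn_pmod i N_gt0), a, b); rewrite ?inE /= ?param_mem_mod // nf_modb.
Qed.

Lemma t_param_set p j : p.1 <= m -> (t ^+ j \in param_set p) = (2 ^ p.1 %| j).
Proof. by move=> al_le; rewrite -nf_t mem_param_set ?param_mem_t. Qed.

Lemma param_set_sub p : param_set p \subset G.
Proof. by rewrite G_nf imsetS ?subsetT. Qed.

Lemma param_set_nfP p g : g \in param_set p ->
  exists i (a b : bool), g = nf i a b /\ param_mem p i a b.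
Proof. by case/imsetP=> [[[i a] b]]; rewrite inE => Pq ->; exists i, a, b. Qed.

Lemma dvdn_half_mul al n : al < m -> 2 ^ al %| h * n.
Proof. by move=> al_lt; rewrite dvdn_mulr // dvdn_exp2l // -ltnS subn1 prednK. Qed.

Lemma group_set_param p : p.1 < m -> is_vhom p.2 -> group_set (param_set p).
Proof.
move=> al_lt vh; have al_le := ltnW al_lt; apply/group_setP; split.
  by rewrite -nf1 mem_param_set ?param_mem0.
move=> _ _ /param_set_nfP[i [a [b [-> Pi]]]] /param_set_nfP[j [c [d [-> Pj]]]].
by rewrite nf_mulb mem_param_set // param_memDr ?dvdn_half_mul ?param_memM.
Qed.

Lemma z_param_set p : p.1 < m -> z \in param_set p.
Proof.
move=> al_lt; rewrite -nf_t -[h]muln1 -[(h * 1)%N]add0n mem_param_set ?(ltnW al_lt) //.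
by rewrite param_memDr ?param_mem0 ?dvdn_half_mul.
Qed.

Lemma param_set_neq1 p : p.1 < m -> param_set p :!=: 1.
Proof.
move=> al_lt; apply: contraNneq (z_neq1) => P1.
by move: (z_param_set al_lt); rewrite P1 inE.
Qed.

Lemma param_set_normal p : p.1 < m -> param_set p <| G.
Proof.
move=> al_lt; have al_le := ltnW al_lt; rewrite /normal param_set_sub defG gen_subG.
apply/subsetP=> s; rewrite !inE -orbA => /or3P[] /eqP->;
  apply/subsetP=> _ /imsetP[_ /param_set_nfP[i [a [b [-> Pi]]]] ->].
- by rewrite nf_conjx mem_param_set // param_memDr ?dvdn_half_mul.
- by rewrite nf_conjy mem_param_set // param_memDr ?dvdn_half_mul.
by rewrite nf_conjt mem_param_set.
Qed.

Lemma param_setE (K : {group gT}) p : p.1 <= m ->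
  K \subset param_set p -> t ^+ (2 ^ p.1) \in K ->
  (forall (a b : bool) s, a || b -> vhom_at p.2 a b = Some s ->
     exists r, nf r a b \in K) ->
  K :=: param_set p.
Proof.
move=> al_le sKP tK reps; apply/eqP; rewrite eqEsubset sKP /=.
apply/subsetP=> _ /param_set_nfP[i [a [b [-> Pi]]]].
have [s Es] : exists s, vhom_at p.2 a b = Some s.
  by move: Pi; rewrite /param_mem; case: vhom_at => // s; exists s.
have [r Kr] : exists r, nf r a b \in K.
  by case: a b Es {Pi} => [] [] Es; try exact: reps Es; exists 0; rewrite nf1.
have Pr : param_mem p r a b by rewrite -mem_param_set // (subsetP sKP).
rewrite (nf_shift i r) groupM // (expg_dvd_mem tK) // dvdn_shift ?dvdn_exp2l ?N_gt0 //.
by move: Pi Pr; rewrite /param_mem Es /= => /eqP-> /eqP->.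
Qed.

Lemma param_set_inj p p' : D1_param m p -> D1_param m p' ->
  param_set p = param_set p' -> p = p'.
Proof.
case: p p' => al c [al' c'] /and3P[/= al_lt _ ok] /and3P[/= al'_lt _ ok'] eq_set.
have memP i a b : param_mem (al, c) i a b = param_mem (al', c') i a b.
  by rewrite -!mem_param_set ?eq_set // ltnW.
have eq_al : al = al'.
  have := memP (2 ^ al)%N false false; have := memP (2 ^ al')%N false false.
  rewrite !param_mem_t /= !dvdnn !dvdn_Pexp2l // => le_al /esym le_al'.
  by apply/eqP; rewrite eqn_leq le_al le_al'.
subst al'; congr (_, _); apply: vhom_ext => a b.
by apply: (coset_mem_inj (vhom_ok_at a b ok) (vhom_ok_at a b ok')) => i; apply: memP.
Qed.

Lemma param_setP (K : {set gT}) p : p.1 <= m -> K \subset G ->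
  (forall i (a b : bool), (nf i a b \in K) = param_mem p i a b) -> K = param_set p.
Proof.
move=> al_le sKG memK; apply/setP=> g; apply/idP/idP => [Kg|].
  by have [i [a [b eg]]] := G_nfP (subsetP sKG g Kg); rewrite eg mem_param_set // -memK -eg.
by case/param_set_nfP=> i [a [b [-> /esym]]]; rewrite -memK.
Qed.

Lemma param_group_is_vhom (K : {group gT}) p : p.1 < m -> vhom_ok p.1 p.2 ->
  (forall i (a b : bool), (nf i a b \in K) = param_mem p i a b) -> is_vhom p.2.
Proof.
case: p => al c /= al_lt ok memK; apply/is_vhomP => a b a' b' s s' E E'.
have : nf (2 ^ al.-1 * s) a b * nf (2 ^ al.-1 * s') a' b' \in K.
  by rewrite groupM // memK /param_mem /= ?E ?E' /= eqxx.
have twistP a0 b0 s0 : vhom_at c a0 b0 = Some s0 -> s0 -> 0 < al.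
  by move=> E0; move: (vhom_ok_at a0 b0 ok); rewrite E0 => /[swap] ->.
rewrite nf_mulb memK param_memDr ?dvdn_half_mul // /param_mem /=.
case E'': vhom_at => [s''|] //= /eqP; rewrite half_twistD => /half_twist_inj-> //.
  by case: s E => E /=; [move=> _; exact: twistP E isT | exact: twistP E'].
exact: twistP E''.
Qed.

Lemma expg_pow2_mem (H : {group gT}) j : t ^+ j \in H -> t ^+ j != 1 ->
  exists v, [/\ v < m, 2 ^ v %| j & t ^+ (2 ^ v) \in H].
Proof.
move=> tjH tj_neq1; have jN_gt0 : 0 < j %% N.
  by rewrite lt0n; apply: contraNneq tj_neq1 => jN0; rewrite -(expg_mod _ tN) jN0.
have [v [w [v_lt odd_w ej]]] := pow2_odd_factor jN_gt0 (ltn_pmod j N_gt0).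
have dvN : 2 ^ v %| N by rewrite dvdn_exp2l // ltnW.
exists v; split=> //; first by rewrite /dvdn -(modn_dvdm j dvN) ej modnMl.
have co_tw : coprime #|<[t]>| w.
  apply: (@coprime_dvdl _ N); first by rewrite -orderE order_dvdn tN.
  by rewrite coprimeXl // coprime2n.
rewrite -(expgK co_tw (mem_cycle t (2 ^ v))) groupX //.
by rewrite -expgM mulnC -ej (expg_mod _ tN).
Qed.

Lemma z_in_normal (H : {group gT}) : H <| G -> H :!=: 1 -> z \in H.
Proof.
case/andP=> sHG nHG /trivgPn[g Hg g_neq1].
have [i [a [b eg]]] := G_nfP (subsetP sHG g Hg); subst g.
have zH s : s \in G -> nf i a b ^ s = nf i a b * z -> z \in H.
  move=> Gs eJ; rewrite -(mulKg (nf i a b) z) -eJ groupM ?groupV //.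
  by rewrite memJ_norm // (subsetP nHG).
have nf_mulz : nf i a b * z = nf (i + h) a b.
  by rewrite -nf_t nf_mulb /= !muln0 addn0 !addbF.
case: a nf_mulz zH Hg g_neq1 => nf_mulz zH Hg g_neq1.
  by apply: (zH y); rewrite ?nf_conjy ?muln1 -?nf_y ?nf_in_G.
case: b nf_mulz zH Hg g_neq1 => nf_mulz zH Hg g_neq1.
  by apply: (zH x); rewrite ?nf_conjx ?muln1 -?nf_x ?nf_in_G.
move: Hg g_neq1; rewrite nf_t => tiH ti_neq1.
have [v [v_lt _ tvH]] := expg_pow2_mem tiH ti_neq1.
have v_le : (v <= m - 1)%N by rewrite -ltnS subn1 prednK.
by rewrite -(subnKC v_le) expnD expgM groupX.
Qed.

Lemma normal_t_index (H : {group gT}) : z \in H ->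
  exists2 al, al < m & forall j, (t ^+ j \in H) = (2 ^ al %| j).
Proof.
move=> zH; have exP : exists a, t ^+ (2 ^ a) \in H by exists (m - 1).
have [al tH min_al] := ex_minnP exP.
have al_lt : al < m by have := min_al _ zH; lia.
exists al => // j; apply/idP/idP => [tjH|]; last exact: expg_dvd_mem.
have [tj1|tj_neq1] := eqVneq (t ^+ j) 1.
  have /eqP : nf j false false = nf 0 false false by rewrite nf_t nf1.
  rewrite eq_nf mod0n !andbT; apply: dvdn_trans.
  by rewrite dvdn_exp2l // ltnW.
have [v [_ dvj tvH]] := expg_pow2_mem tjH tj_neq1.
by apply: dvdn_trans dvj; rewrite dvdn_exp2l // min_al.
Qed.

Lemma subgroup_coset_mem (H : {group gT}) al (a b : bool) : al < m ->
  (forall j, (t ^+ j \in H) = (2 ^ al %| j)) ->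
  exists2 o, twist_ok al o & forall i, (nf i a b \in H) = coset_mem al o i.
Proof.
move=> al_lt tH; have dN : 2 ^ al %| N by rewrite dvdn_exp2l // ltnW.
have shiftH i r : nf r a b \in H -> (nf i a b \in H) = (i == r %[mod 2 ^ al]).
  by move=> Hr; rewrite (nf_shift i r) groupMr // tH dvdn_shift ?N_gt0.
have [/existsP[r Hr]|noH] := boolP [exists r : 'I_N, nf r a b \in H]; last first.
  exists None => // i; apply/negbTE; apply: contra noH => Hi.
  by apply/existsP; exists (Ordinal (ltn_pmod i N_gt0)); rewrite -nf_modb.
have := groupM Hr Hr; rewrite nf_mulb !addbb nf_t tH (dvdn_addl _ (dvdn_half_mul _ al_lt)).
case/double_mod_pow2=> s s_al er.
exists (Some s) => [|i]; first by case: s s_al {er} => //= /(_ isT).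
by rewrite (shiftH i r Hr) /= er.
Qed.

Lemma normal_param (H : {group gT}) : H <| G -> H :!=: 1 ->
  exists2 p, D1_param m p & H :=: param_set p.
Proof.
move=> nHG ntH; have [al al_lt tH] := normal_t_index (z_in_normal nHG ntH).
have [cx okx Hx] := subgroup_coset_mem true false al_lt tH.
have [cy oky Hy] := subgroup_coset_mem false true al_lt tH.
have [cxy okxy Hxy] := subgroup_coset_mem true true al_lt tH.
pose p := (al, (cx, cy, cxy)).
have memH i (a b : bool) : (nf i a b \in H) = param_mem p i a b.
  by case: a; case: b; rewrite ?Hx ?Hy ?Hxy // nf_t tH param_mem_t.
have ok : vhom_ok al (cx, cy, cxy) by apply/and3P.
exists p; last by apply: param_setP memH; rewrite ?(normal_sub nHG) // ltnW.
by apply/and3P; split=> //; apply: (@param_group_is_vhom H p).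
Qed.

Lemma gen_param_set (A : {set gT}) p : p.1 < m -> is_vhom p.2 ->
  A \subset param_set p -> t ^+ (2 ^ p.1) \in <<A>> ->
  (forall (a b : bool) s, a || b -> vhom_at p.2 a b = Some s ->
     exists r, nf r a b \in <<A>>) ->
  <<A>> = param_set p.
Proof.
move=> al_lt vh sAP; apply: (@param_setE <<A>>%G _ (ltnW al_lt)).
by rewrite (gen_subG _ (group (group_set_param al_lt vh))).
Qed.

Lemma D1_list_iii_param :
  D1_list_iii m t = map param_set [seq (a, vhom1) | a <- iota 0 m].
Proof.
rewrite -map_comp; apply/eq_in_map=> a; rewrite mem_iota add0n => /= a_lt.
apply: gen_param_set => //; last by move=> [] [].
  by rewrite sub1set t_param_set // ltnW.
by rewrite mem_gen ?set11.
Qed.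

Lemma D1_list_i_param :
  D1_list_i m x y t = map param_set [seq (a, c) | a <- iota 0 m, c <- vhoms_untwisted].
Proof.
rewrite map_allpairs; congr flatten; apply/eq_in_map=> a; rewrite mem_iota add0n => /= a_lt.
rewrite nf_xy -nf_x -nf_y.
have al_le : a <= m by exact: ltnW.
congr [:: _; _; _; _]; apply: gen_param_set => //;
  rewrite ?subUset ?sub1set ?t_param_set ?mem_param_set ?dvdnn ?mem_gen ?inE ?eqxx ?orbT //;
  rewrite /param_mem /= ?muln0 ?eqxx //; move=> [] [] s //= _ _;
  try by exists 0; rewrite mem_gen // !inE eqxx ?orbT.
by exists (0 + 0); apply: nf_mul_xy; rewrite mem_gen // !inE eqxx ?orbT.
Qed.

Lemma D1_list_ii_param :
  D1_list_ii m x y t = map param_set [seq (b.+1, c) | b <- iota 0 (m - 1), c <- vhoms_twisted].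
Proof.
rewrite map_allpairs; congr flatten; apply/eq_in_map=> b; rewrite mem_iota add0n => /= b_lt.
have al_lt : b.+1 < m by lia.
have al_le := ltnW al_lt.
rewrite nf_xy -nf_x -nf_y !nf_tmul !addn0.
congr [:: _; _; _; _; _; _]; apply: gen_param_set => //;
  rewrite ?subUset ?sub1set ?mem_param_set ?z_param_set //;
  rewrite /param_mem /= ?muln0 ?muln1 ?eqxx //; try (move=> [] [] s //= _ _).
(* Coset representatives are generators or products of two of them, and t^(2^(b+1))
   is the square of a generator, times z for the twisted xy-coset. *)
all: try by exists 0; rewrite mem_gen // !inE eqxx ?orbT.
all: try by exists (2 ^ b)%N; rewrite mem_gen // !inE eqxx ?orbT.
all: try by exists (0 + 2 ^ b)%N; apply: nf_mul_xy; rewrite mem_gen // !inE eqxx ?orbT.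
all: try by exists (2 ^ b + 0)%N; apply: nf_mul_xy; rewrite mem_gen // !inE eqxx ?orbT.
all: try by exists (2 ^ b + 2 ^ b)%N; apply: nf_mul_xy; rewrite mem_gen // !inE eqxx ?orbT.
all: try by rewrite (nf_pow2_sqr b true false) /= mul0n mulg1 groupM ?mem_gen //
  !inE eqxx ?orbT.
all: try by rewrite (nf_pow2_sqr b false true) /= muln0 mulg1 groupM ?mem_gen //
  !inE eqxx ?orbT.
rewrite (nf_pow2_sqr b true true); apply: groupM; [apply: groupM | apply: groupX];
  by apply: mem_gen; rewrite !inE eqxx ?orbT.
Qed.

Lemma D1_list_param : D1_list m x y t = map param_set (param_list m).
Proof.
by rewrite /D1_list /param_list !map_cat D1_list_i_param D1_list_ii_param D1_list_iii_param.
Qed.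

End Generation.
End Relations.

Theorem lemma4 (gT : finGroupType) (m : nat) (x y t : gT) (G : {group gT}) :
  (2 <= m)%N ->
  D1_rels m x y t ->
  G :=: <<[set x; y; t]>> ->
  #|G| = (2 ^ (m + 2))%N ->
  uniq (D1_list m x y t) /\
  (forall H : {group gT},
     (H <| G) && (H :!=: 1) <-> (H : {set gT}) \in D1_list m x y t).
Proof.
move=> m_ge2 rels defG cardG; have m_gt0 : (0 < m)%N by apply: leq_trans m_ge2.
rewrite (D1_list_param m_gt0 rels defG cardG); split=> [|H].
  rewrite map_inj_in_uniq ?uniq_param_list // => p q.
  by rewrite !mem_param_list; apply: (param_set_inj m_gt0 rels defG cardG).
split=> [/andP[nHG ntH] | /mapP[p]].
  have [p Pp ->] := normal_param m_gt0 rels defG cardG nHG ntH.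
  by rewrite map_f ?mem_param_list.
rewrite mem_param_list => /and3P[al_lt _ _] ->.
by rewrite (param_set_normal m_gt0 rels defG cardG) ?(param_set_neq1 m_gt0 rels defG cardG).
Qed.
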